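(* Let $\mathbf P$ be a multi-cut polygon as in the context, with $Q(z)=\prod_{i=1}^{d+N}(z-x_i)$, and let $\mathcal S$ be the set of integer points $(n,y)\in\widetilde{\mathbf P}\setminus\mathbf P$ such that $(n,y-\frac12)$ lies on an upper oblique boundary segment of $\mathbf P$ or $(n,y+\frac12)$ lies on an upper vertical boundary segment of $\mathbf P$. Then for $(n,y)\in\mathcal S$, summing over the roots $z=y-N+n,\dots,y$ of $(z-y)_{N-n+1}$, $$\sum_{z=y-N+n}^{y}\frac{(N-n)!\,Q(z)}{(z-y)_{N-n+1}\,Q'(z)\,S^{(N)}_z(w)}=\frac1{S^{(n)}_y(w)},$$ where each summand means the value at $z$ of the rational function $\frac{(N-n)!\,Q(z)}{(z-y)_{N-n+1}Q'(z)}$ after cancellation of common factors, times $1/S^{(N)}_z(w)$.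
   Context: Coordinates $(m,x)\in\mathbb R^2$ ($m$ = height), lattice lines $m\in\mathbb Z$, $x\in\mathbb Z+\frac12$ (vertical), $x+m\in\mathbb Z+\frac12$ (oblique). Multi-cut polygon: fix integers $N\ge1$, $d\ge0$; $\widetilde{\mathbf P}=\{(m,x):0\le m\le N,\ -d-\frac12-m\le x\le x_1+\frac12\}$. $\mathbf P$ is obtained from $\widetilde{\mathbf P}$ by removing: a triangle at the upper-left corner with $b_0$ rows (bounded by the left side of $\widetilde{\mathbf P}$, $m=N$ and a vertical line); a triangle at the upper-right corner with $b_u$ rows (bounded by the right side, $m=N$ and an oblique line); $\ell$ disjoint triangular lower cuts with bases on $m=0$ (vertical left side, oblique right side), of total size $d$; $u-1$ disjoint triangular upper cuts of sizes $b_1,\dots,b_{u-1}$ with bases on $m=N$ (oblique left side, vertical right side); $\sum_0^ub_i=d+N$; all vertices on lines $x\in\mathbb Z+\frac12$. Upper oblique boundary segments: the right oblique side of $\mathbf P$ and the oblique sides of upper cuts; upper vertical boundary segments: the left vertical side of $\mathbf P$ and the vertical sides of upper cuts. $x_1>\dots>x_{d+N}$ are the integer points of $(\widetilde{\mathbf P}\setminus\mathbf P)\cap\{m=N\}$. Notation: $(a)_k=a(a+1)\cdots(a+k-1)$, $(a)_0=1$; $S^{(k)}_x(w)=w^{x+1}(1-w)^k$. *)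

From HB Require Import structures.
From mathcomp Require Import all_boot all_order all_algebra.
Set Implicit Arguments. Unset Strict Implicit. Unset Printing Implicit Defensive.
Import Order.TTheory GRing.Theory Num.Theory.
Local Open Scope ring_scope.

(* Coordinates (m, x): m = height, x = horizontal.  Geometry is done over rat.
   A half-integer is written  l + 1/2  with l : int. *)
Definition half : rat := 2%:R^-1.
Definition hf (l : int) : rat := l%:~R + half.

(* Data of a multi-cut polygon:
   - N, d;
   - r : the right side of Ptilde is the vertical line x = r + 1/2 (r = x_1);
   - b0 (rows of the upper-left corner triangle), bu (upper-right one);
   - up  : upper cuts (l, b): base on m = N from x = l+1/2 to x = l+1/2+b,
           oblique left side, vertical right side;
   - low : lower cuts (l, a): base on m = 0 from x = l+1/2 to x = l+1/2+a,
           vertical left side, oblique right side. *)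
Record mcpoly := MCPoly {
  mc_N : nat; mc_d : nat; mc_r : int; mc_b0 : nat; mc_bu : nat;
  mc_up : seq (int * nat); mc_low : seq (int * nat) }.

Section Geometry.
Variable P : mcpoly.
Let N : rat := (mc_N P)%:R.
Let d : rat := (mc_d P)%:R.

Definition Ptilde (m x : rat) : bool :=
  (0 <= m <= N) && (- d - half - m <= x <= hf (mc_r P)).

(* closed upper-left triangle: left side of Ptilde, m = N, vertical line *)
Definition triUL (m x : rat) : bool :=
  [&& m <= N, - d - half - m <= x & x <= - d - N - half + (mc_b0 P)%:R].

(* closed upper-right triangle: right side of Ptilde, m = N, oblique line *)
Definition triUR (m x : rat) : bool :=
  [&& m <= N, x <= hf (mc_r P) & hf (mc_r P) + N - (mc_bu P)%:R <= x + m].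

Definition triUp (c : int * nat) (m x : rat) : bool :=
  [&& m <= N, hf c.1 + N <= x + m & x <= hf c.1 + c.2%:R].

Definition triLow (c : int * nat) (m x : rat) : bool :=
  [&& 0 <= m, hf c.1 <= x & x + m <= hf c.1 + c.2%:R].

Definition pieces : seq (rat -> rat -> bool) :=
  [:: triUL; triUR] ++ map triUp (mc_up P) ++ map triLow (mc_low P).

Definition removed (m x : rat) : bool :=
  has (fun T : rat -> rat -> bool => T m x) pieces.

Definition inPtminusP (m x : rat) : bool := Ptilde m x && removed m x.

(* The integer points of (Ptilde \ P) on the line m = N: x_1 > ... > x_{d+N}
   (listed here in increasing order). *)
Definition topRemoved : seq int :=
  [seq x <- [seq (k%:Z - (mc_d P + mc_N P)%:Z)%R
              | k <- iota 0 (absz (mc_r P + (mc_d P + mc_N P)%:Z + 1)%R)]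
   | inPtminusP N x%:~R].

(* upper oblique boundary segments: right oblique side of P and the oblique
   sides of the upper cuts *)
Definition on_up_oblique (m x : rat) : bool :=
  ((x + m == hf (mc_r P) + N - (mc_bu P)%:R) && (N - (mc_bu P)%:R <= m <= N))
  || has (fun c : int * nat =>
            (x + m == hf c.1 + N) && (N - c.2%:R <= m <= N)) (mc_up P).

(* upper vertical boundary segments: left vertical side of P and the vertical
   sides of the upper cuts *)
Definition on_up_vertical (m x : rat) : bool :=
  ((x == - d - N - half + (mc_b0 P)%:R) && (N - (mc_b0 P)%:R <= m <= N))
  || has (fun c : int * nat =>
            (x == hf c.1 + c.2%:R) && (N - c.2%:R <= m <= N)) (mc_up P).

Definition inS (n : nat) (y : int) : bool :=
  inPtminusP n%:R y%:~R &&
  (on_up_oblique n%:R (y%:~R - half) || on_up_vertical n%:R (y%:~R + half)).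

End Geometry.

Definition mc_wf (P : mcpoly) : Prop :=
  [/\ (1 <= mc_N P)%N,
      all (fun c : int * nat => 0 < c.2)%N (mc_up P) /\
      all (fun c : int * nat => 0 < c.2)%N (mc_low P),
      (mc_b0 P + mc_bu P + \sum_(c <- mc_up P) c.2 = mc_d P + mc_N P)%N,
      (\sum_(c <- mc_low P) c.2 = mc_d P)%N &
      [/\
          (forall i j : nat, (i < j < size (pieces P))%N ->
             forall m x : rat,
               ~~ (nth (fun _ _ => false) (pieces P) i m x &&
                   nth (fun _ _ => false) (pieces P) j m x)),
          (forall i : nat, (i < size (pieces P))%N -> forall m x : rat,
             nth (fun _ _ => false) (pieces P) i m x -> Ptilde P m x),
          (* x_1 (= mc_r P) is the largest element of (Ptilde\P) ∩ {m = N} *)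
          mc_r P \in topRemoved P &
          size (topRemoved P) = (mc_d P + mc_N P)%N]].

Definition Qpoly (R : numFieldType) (P : mcpoly) : {poly R} :=
  \prod_(x <- topRemoved P) ('X - (x%:~R)%:P).

Definition poch (R : numFieldType) (a : {poly R}) (k : nat) : {poly R} :=
  \prod_(i < k) (a + (i%:R)%:P).

Definition Sfun (R : numFieldType) (k : nat) (x : int) (w : R) : R :=
  w ^ (x + 1) * (1 - w) ^+ k.

Definition cancel_eval (R : numFieldType) (p q : {poly R}) (z : R) : R :=
  (p %/ gcdp p q).[z] / (q %/ gcdp p q).[z].

Definition cancel_den (R : numFieldType) (p q : {poly R}) : {poly R} :=
  q %/ gcdp p q.

(* The removed upper triangles (the two corner triangles and the upper cuts)
   have their sides on lines x = l + 1/2 and x + m = l + 1/2, so an integer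
   point of a removed triangle lies in it together with its two half-shifts
   (n, y -+ 1/2).  For (n, y) in S one of these half-shifts lies on the
   boundary of an upper triangle, and disjointness of the removed triangles
   forces (n, y) into that same triangle.  An upper triangle contains the
   whole segment from (N, y - (N - n)) to (N, y), so y, y - 1, ..., y - N + n
   are simple roots of Q.  At z = y - j the cancelled fraction is therefore
   (N - n)! / prod_(i <> j) (i - j) = (-1)^j C(N - n, j), and since
   S^(N)_(y-j)(w) = S^(n)_y(w) (1 - w)^(N - n) w^(-j), the sum is the binomial
   expansion of (1 - w)^(N - n) divided by (1 - w)^(N - n) S^(n)_y(w). *)

From HB Require Import structures.
From mathcomp Require Import all_boot all_order all_algebra.
From mathcomp Require Import ring lra zify.
Set Implicit Arguments.
Unset Strict Implicit.
Unset Printing Implicit Defensive.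

Import Order.TTheory GRing.Theory Num.Theory.
Local Open Scope ring_scope.

Section Cancellation.
Variables (R : numFieldType) (p q u v : {poly R}).
Hypotheses (p_neq0 : p != 0) (pv_qu : p * v = q * u).

Let g_neq0 : gcdp p q != 0. Proof. by rewrite gcdp_eq0 negb_and p_neq0. Qed.

Lemma cancel_cross : (p %/ gcdp p q) * v = cancel_den p q * u.
Proof.
apply: (mulIf g_neq0); rewrite mulrAC divpK ?dvdp_gcdl // pv_qu.
by rewrite [RHS]mulrAC divpK ?dvdp_gcdr.
Qed.

Lemma cancel_den_dvdp : cancel_den p q %| v.
Proof.
have coprime_pq : coprimep (cancel_den p q) (p %/ gcdp p q).
  by rewrite coprimep_sym coprimep_div_gcd // p_neq0.
by rewrite -(Gauss_dvdpr v coprime_pq) cancel_cross dvdp_mulr.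
Qed.

Variable z : R.
Hypothesis vz_neq0 : v.[z] != 0.

Lemma cancel_den_neq0 : (cancel_den p q).[z] != 0.
Proof.
move: vz_neq0; have /dvdpP [t ->] := cancel_den_dvdp.
by rewrite hornerM; apply: contraNneq => ->; rewrite mulr0.
Qed.

Lemma cancel_evalE : cancel_eval p q z = u.[z] / v.[z].
Proof.
apply/eqP; rewrite eqr_div ?cancel_den_neq0 //.
by have /(congr1 (horner^~ z)) := cancel_cross; rewrite !hornerM => ->; rewrite mulrC.
Qed.

End Cancellation.

Lemma prod_natr_sub_below (R : comPzRingType) (j : nat) :
  \prod_(0 <= i < j) ((i%:R : R) - j%:R) = (-1) ^+ j * j`!%:R.
Proof.
rewrite big_nat_rev /= add0n (eq_big_nat _ _ (F2 := fun i => - i.+1%:R)).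
  by rewrite big_mkord prodrN card_ord fact_prod big_add1 -natr_prod big_mkord.
by move=> i /andP [_ ij]; rewrite natrB; [ring | lia].
Qed.

Lemma prod_natr_sub_above (R : comPzRingType) (j k : nat) : (j <= k)%N ->
  \prod_(j.+1 <= i < k.+1) ((i%:R : R) - j%:R) = (k - j)`!%:R.
Proof.
move=> jk; rewrite (eq_big_nat _ _ (F2 := fun i => (i - j)%N%:R)); last first.
  by move=> i /andP [ji _]; rewrite natrB //; lia.
rewrite -natr_prod -[j.+1]add1n big_addn fact_prod subSn //.
by congr _%:R; apply: eq_bigr => i _; lia.
Qed.

Lemma poch_XsubC_factor (R : numFieldType) (y : R) (k j : nat) : (j <= k)%N ->
  exists2 M : {poly R}, poch ('X - y%:P) k.+1 = ('X - (y - j%:R)%:P) * M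
    & M.[y - j%:R] = (-1) ^+ j * (j`! * (k - j)`!)%:R.
Proof.
move=> jk; pose f i := 'X - y%:P + (i%:R)%:P.
exists ((\prod_(0 <= i < j) f i) * \prod_(j.+1 <= i < k.+1) f i).
  rewrite /poch -(big_mkord xpredT f) (big_cat_nat _ (n := j)) ?leqW //.
  rewrite (big_ltn (m := j)) //.
  by rewrite mulrCA /f polyCB opprB addrA addrAC.
have f_at i : (f i).[y - j%:R] = i%:R - j%:R by rewrite !hornerE; ring.
rewrite hornerM !horner_prod; under [in LHS]eq_bigr do rewrite f_at.
under [X in _ * X]eq_bigr do rewrite f_at.
by rewrite prod_natr_sub_below prod_natr_sub_above // natrM mulrA.
Qed.

Lemma topRemoved_uniq (P : mcpoly) : uniq (topRemoved P).
Proof.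
rewrite filter_uniq // map_inj_uniq ?iota_uniq // => a b /eqP.
by rewrite subr_eq addrNK => /eqP [].
Qed.

Lemma Qpoly_monic (R : numFieldType) (P : mcpoly) : Qpoly R P \is monic.
Proof. exact: monic_prod_XsubC. Qed.

Lemma Qpoly_simple_root (R : numFieldType) (P : mcpoly) (x : int) :
  x \in topRemoved P ->
  exists2 r : {poly R}, Qpoly R P = ('X - x%:~R%:P) * r & r.[x%:~R] != 0.
Proof.
move=> x_top; exists (\prod_(x' <- rem x (topRemoved P)) ('X - x'%:~R%:P)).
  by rewrite /Qpoly (perm_big _ (perm_to_rem x_top)) big_cons.
rewrite horner_prod prodf_seq_neq0; apply/allP => x'.
rewrite mem_rem_uniq ?topRemoved_uniq // => /andP [x'_neq_x _].
by rewrite hornerXsubC subr_eq0 eqr_int eq_sym.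
Qed.

Lemma horner_derivXsubCM (R : comNzRingType) (a : R) (r : {poly R}) :
  (('X - a%:P) * r)^`().[a] = r.[a].
Proof. by rewrite derivM derivXsubC !hornerE subrr; ring. Qed.

Lemma fact_div_signed (R : numFieldType) (k j : nat) : (j <= k)%N ->
  k`!%:R / ((-1) ^+ j * (j`! * (k - j)`!)%:R) = (-1) ^+ j * 'C(k, j)%:R :> R.
Proof.
move=> jk; have fact_neq0 i : i`!%:R != 0 :> R by rewrite pnatr_eq0 -lt0n fact_gt0.
rewrite -(bin_fact jk) !natrM invfM -exprVn invrN1; field.
by rewrite !fact_neq0.
Qed.

Lemma cancel_eval_Qpoly_poch (R : numFieldType) (P : mcpoly) (y : int) (k j : nat) :
  (j <= k)%N -> (y - j%:Z) \in topRemoved P ->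
  let num : {poly R} := k`!%:R *: Qpoly R P in
  let den : {poly R} := poch ('X - y%:~R%:P) k.+1 * (Qpoly R P)^`() in
  (cancel_den num den).[(y - j%:Z)%:~R] != 0 /\
  cancel_eval num den (y - j%:Z)%:~R = (-1) ^+ j * 'C(k, j)%:R.
Proof.
move=> jk z_top num den; set z : R := (y - j%:Z)%:~R.
have z_def : z = y%:~R - j%:R by rewrite /z intrB.
have [r Q_def rz_neq0] := Qpoly_simple_root R z_top.
have [M poch_def Mz] := poch_XsubC_factor (y%:~R : R) jk.
rewrite -z_def -/z in Q_def rz_neq0 poch_def Mz.
have Q'z : (Qpoly R P)^`().[z] = r.[z] by rewrite Q_def horner_derivXsubCM.
have Mz_neq0 : M.[z] != 0.
  by rewrite Mz mulf_neq0 ?signr_eq0 // pnatr_eq0 -lt0n muln_gt0 !fact_gt0.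
have num_neq0 : num != 0.
  by rewrite scaler_eq0 negb_or pnatr_eq0 -lt0n fact_gt0 monic_neq0 ?Qpoly_monic.
have cross : num * (M * (Qpoly R P)^`()) = den * (k`!%:R *: r).
  rewrite /num /den; move: (Qpoly R P)^`() => Q'.
  by rewrite poch_def Q_def -!mul_polyC; ring.
have vz_neq0 : (M * (Qpoly R P)^`()).[z] != 0 by rewrite hornerM Q'z mulf_neq0.
split; first by have := cancel_den_neq0 num_neq0 cross vz_neq0.
rewrite (cancel_evalE num_neq0 cross vz_neq0) hornerZ hornerM Q'z Mz.
by rewrite -mulf_div divff // mulr1 fact_div_signed.
Qed.

Lemma Sfun_shift (R : numFieldType) (k n j : nat) (y : int) (w : R) : w != 0 ->
  Sfun (k + n) (y - j%:Z) w = Sfun n y w * (1 - w) ^+ k / w ^+ j.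
Proof.
move=> w_neq0; rewrite /Sfun addrAC expfzDr // -exprnN exprD; ring.
Qed.

Lemma sum_signed_binomial_Sfun (R : numFieldType) (k n : nat) (y : int) (w : R) :
  w != 0 -> w != 1 ->
  \sum_(j < k.+1) (-1) ^+ j * 'C(k, j)%:R / Sfun (k + n) (y - j%:Z) w
  = 1 / Sfun n y w.
Proof.
move=> w_neq0 w_neq1; have c_neq0 : (1 - w) ^+ k != 0.
  by rewrite expf_neq0 // subr_eq0 eq_sym.
under eq_bigr => j _ do rewrite Sfun_shift // invfM invrK [_^-1 * _]mulrC mulrA.
rewrite -mulr_suml.
have -> : \sum_(j < k.+1) (-1) ^+ j * 'C(k, j)%:R * w ^+ j = (1 - w) ^+ k.
  rewrite (exprDn 1 (- w)); apply: eq_bigr => j _.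
  by rewrite expr1n mul1r [(- w) ^+ _]exprNn -mulr_natr; ring.
by rewrite invfM mulrCA divff // mulr1 div1r.
Qed.

Lemma intr_ge0_of_ge_Nhalf (z : int) : - half <= z%:~R :> rat -> 0 <= z%:~R :> rat.
Proof.
rewrite ler0z /half => z_ge; rewrite leNgt; apply/negP => z_lt0.
have : z%:~R <= -1 :> rat by rewrite -[-1]/((-1)%:~R) ler_int; lia.
lra.
Qed.

Lemma intr_le0_of_le_half (z : int) : z%:~R <= half :> rat -> z%:~R <= 0 :> rat.
Proof.
rewrite /half => z_le; rewrite -[0]/(0%:~R) ler_int leNgt; apply/negP => z_gt0.
have : 1 <= z%:~R :> rat by rewrite -[1]/(1%:~R) ler_int; lia.
lra.
Qed.

Definition upper_tri (N : nat) (l : int) (b : nat) (m x : rat) : bool :=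
  [&& m <= N%:R, hf l + N%:R - b%:R <= x + m & x <= hf l].

Section UpperTriangle.
Variables (N : nat) (l : int) (b : nat).

Lemma upper_tri_half_shift (n : nat) (y : int) : upper_tri N l b n%:R y%:~R ->
  upper_tri N l b n%:R (y%:~R - half) && upper_tri N l b n%:R (y%:~R + half).
Proof.
rewrite /upper_tri /hf /half => /and3P [n_le oblique vertical].
have : 0 <= (y + n%:Z - l - N%:Z + b%:Z - 1)%:~R :> rat.
  by apply: intr_ge0_of_ge_Nhalf; rewrite /half; lra.
have : (y - l)%:~R <= 0 :> rat by apply: intr_le0_of_le_half; rewrite /half; lra.
by move=> *; apply/andP; split; apply/and3P; split; lra.
Qed.

Lemma upper_tri_up (m x t : rat) : upper_tri N l b m x -> 0 <= t -> t <= N%:R - m ->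
  upper_tri N l b N%:R (x - t).
Proof. by rewrite /upper_tri => /and3P [? ? ?] ? ?; apply/and3P; split; lra. Qed.

Lemma upper_tri_oblique_side (m x : rat) :
  x + m = hf l + N%:R - b%:R -> N%:R - b%:R <= m <= N%:R -> upper_tri N l b m x.
Proof. by rewrite /upper_tri => ? /andP [? ?]; apply/and3P; split; lra. Qed.

Lemma upper_tri_vertical_side (m x : rat) :
  x = hf l -> N%:R - b%:R <= m <= N%:R -> upper_tri N l b m x.
Proof. by rewrite /upper_tri => ? /andP [? ?]; apply/and3P; split; lra. Qed.

End UpperTriangle.

Lemma triLow_half_shift (c : int * nat) (n : nat) (y : int) : triLow c n%:R y%:~R ->
  triLow c n%:R (y%:~R - half) && triLow c n%:R (y%:~R + half).
Proof.
rewrite /triLow /hf /half => /and3P [n_ge0 vertical oblique].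
have : 0 <= (y - c.1 - 1)%:~R :> rat by apply: intr_ge0_of_ge_Nhalf; rewrite /half; lra.
have : (y + n%:Z - c.1 - c.2%:Z)%:~R <= 0 :> rat.
  by apply: intr_le0_of_le_half; rewrite /half; lra.
by move=> *; apply/andP; split; apply/and3P; split; lra.
Qed.

Section Pieces.
Variable P : mcpoly.
Local Notation N := (mc_N P).

Lemma triUL_upper :
  triUL P =2 upper_tri N ((mc_b0 P)%:Z - (mc_d P)%:Z - N%:Z - 1) (mc_b0 P).
Proof.
move=> m x; rewrite /triUL /upper_tri /hf /half.
by apply/and3P/and3P => -[? ? ?]; split; lra.
Qed.

Lemma triUR_upper : triUR P =2 upper_tri N (mc_r P) (mc_bu P).
Proof.
by move=> m x; rewrite /triUR /upper_tri; apply/and3P/and3P => -[? ? ?]; split; lra.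
Qed.

Lemma triUp_upper (c : int * nat) : triUp P c =2 upper_tri N (c.1 + c.2%:Z) c.2.
Proof.
move=> m x; rewrite /triUp /upper_tri /hf /half.
by apply/and3P/and3P => -[? ? ?]; split; lra.
Qed.

Definition piece (i : nat) : rat -> rat -> bool := nth (fun _ _ => false) (pieces P) i.

Lemma size_pieces : size (pieces P) = (size (mc_up P) + size (mc_low P)).+2.
Proof. by rewrite /pieces /= size_cat !size_map. Qed.

Lemma piece_triUp (c : int * nat) :
  c \in mc_up P -> piece (index c (mc_up P)).+2 = triUp P c.
Proof.
move=> c_up; rewrite /piece /pieces /= nth_cat size_map index_mem c_up.
by rewrite (nth_map c) ?index_mem // nth_index.
Qed.

Lemma piece_upper (i : nat) : (i < (size (mc_up P)).+2)%N ->
  exists l b, piece i =2 upper_tri N l b.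
Proof.
case: i => [|[|i]] i_lt; do 2 eexists; first exact: triUL_upper.
  exact: triUR_upper.
rewrite !ltnS in i_lt.
rewrite /piece /pieces /= nth_cat size_map i_lt (nth_map (0%Z, 0%N)).
  exact: triUp_upper.
exact: i_lt.
Qed.

Lemma piece_lower (i : nat) : ((size (mc_up P)).+2 <= i < size (pieces P))%N ->
  exists c, piece i = triLow c.
Proof.
case: i => [|[|i]] // /andP [up_le i_lt].
rewrite !ltnS in up_le; rewrite size_pieces !ltnS in i_lt.
exists (nth (0%Z, 0%N) (mc_low P) (i - size (mc_up P))).
rewrite /piece /pieces /= nth_cat size_map ltnNge up_le /=.
by rewrite (nth_map (0%Z, 0%N)) //; lia.
Qed.

Lemma piece_half_shift (i n : nat) (y : int) : (i < size (pieces P))%N ->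
  piece i n%:R y%:~R -> piece i n%:R (y%:~R - half) && piece i n%:R (y%:~R + half).
Proof.
move=> i_lt; case: (ltnP i (size (mc_up P)).+2) => [/piece_upper [l [b piece_i]] | up_le].
  by rewrite !piece_i; apply: upper_tri_half_shift.
have [c ->] := piece_lower (introT andP (conj up_le i_lt)).
exact: triLow_half_shift.
Qed.

Lemma mem_topRemoved (x : int) :
  (x \in topRemoved P) = inPtminusP P N%:R x%:~R.
Proof.
rewrite mem_filter andb_idr // => /andP [/andP [_ /andP [x_ge x_le]] _].
have x_ge0 : 0 <= (x + (mc_d P + N)%:Z)%:~R :> rat.
  by apply: intr_ge0_of_ge_Nhalf; move: x_ge; rewrite /half; lra.
have x_le_r : (x - mc_r P)%:~R <= 0 :> rat.
  by apply: intr_le0_of_le_half; move: x_le; rewrite /hf /half; lra.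
rewrite ler0z in x_ge0; rewrite -[0]/(0%:~R) ler_int in x_le_r.
apply/mapP; exists (absz (x + (mc_d P + N)%:Z)); last lia.
rewrite mem_iota /=; lia.
Qed.

Lemma inS_le_N (n : nat) (y : int) : inS P n y -> (n <= N)%N.
Proof. by case/andP => /andP [/andP [/andP [_ ]]]; rewrite ler_nat. Qed.

Lemma upper_lt_size_pieces (i : nat) :
  (i < (size (mc_up P)).+2)%N -> (i < size (pieces P))%N.
Proof. by move=> i_lt; rewrite size_pieces (leq_trans i_lt) // !ltnS leq_addr. Qed.

Lemma inS_upper_neighbour (n : nat) (y : int) : inS P n y ->
  exists2 j, (j < (size (mc_up P)).+2)%N &
    exists2 e, e = half \/ e = - half & piece j n%:R (y%:~R + e).
Proof.
case/andP => _ /orP [|].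
- case/orP=> [/andP [/eqP on_side n_range]
             | /hasP [c c_up /andP [/eqP on_side n_range]]].
    exists 1%N => //; exists (- half); first by right.
    by rewrite /piece /= triUR_upper; apply: upper_tri_oblique_side.
  exists (index c (mc_up P)).+2; first by rewrite !ltnS index_mem.
  exists (- half); first by right.
  rewrite piece_triUp // triUp_upper; apply: upper_tri_oblique_side => //.
  by rewrite on_side /hf intrD; ring.
- case/orP=> [/andP [/eqP on_side n_range]
             | /hasP [c c_up /andP [/eqP on_side n_range]]].
    exists 0%N => //; exists half; first by left.
    rewrite /piece /= triUL_upper; apply: upper_tri_vertical_side => //.
    by rewrite on_side /hf /half; lra.
  exists (index c (mc_up P)).+2; first by rewrite !ltnS index_mem.
  exists half; first by left.
  rewrite piece_triUp // triUp_upper; apply: upper_tri_vertical_side => //.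
  by rewrite on_side /hf intrD; ring.
Qed.

Section WellFormed.
Hypothesis wf : mc_wf P.

Lemma piece_disjoint (i j : nat) (m x : rat) :
  (i < size (pieces P))%N -> (j < size (pieces P))%N ->
  piece i m x -> piece j m x -> i = j.
Proof.
case: wf => _ _ _ _ [disjoint _ _ _] i_lt j_lt; rewrite /piece => Ti Tj.
case: (ltngtP i j) => // [ij | ji]; [move: (disjoint i j) | move: (disjoint j i)];
  by rewrite ?ij ?ji ?i_lt ?j_lt => /(_ isT m x); rewrite Ti Tj.
Qed.

Lemma piece_neighbour_eq (i j n : nat) (y : int) (e : rat) :
  (i < size (pieces P))%N -> (j < size (pieces P))%N ->
  e = half \/ e = - half ->
  piece i n%:R y%:~R -> piece j n%:R (y%:~R + e) -> i = j.
Proof.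
move=> i_lt j_lt e_half /(piece_half_shift i_lt)/andP [Ti_minus Ti_plus] Tj.
by apply: (piece_disjoint i_lt j_lt _ Tj); case: e_half => ->.
Qed.

Lemma inS_upper_piece (n : nat) (y : int) : inS P n y ->
  exists2 i, (i < (size (mc_up P)).+2)%N & piece i n%:R y%:~R.
Proof.
move=> yS; have [j j_up [e e_half Tj]] := inS_upper_neighbour yS.
have /andP [/andP [_ /(has_nthP (fun _ _ => false)) [i i_lt Ti]] _] := yS.
have ij := piece_neighbour_eq i_lt (upper_lt_size_pieces j_up) e_half Ti Tj.
by rewrite -ij in j_up; exists i.
Qed.

Lemma inS_column_topRemoved (n : nat) (y : int) : inS P n y ->
  forall j : nat, (j <= N - n)%N -> y - j%:Z \in topRemoved P.
Proof.
move=> yS j j_le; have [i i_up Ti] := inS_upper_piece yS.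
have [l [b piece_i]] := piece_upper i_up.
have Ti_top : piece i N%:R (y - j%:Z)%:~R.
  move: Ti; rewrite !piece_i intrB => /upper_tri_up; apply; first exact: ler0n.
  by rewrite lerBrDr -natrD ler_nat; have := inS_le_N yS; lia.
have [_ _ _ _ [_ inside _ _]] := wf.
have i_lt := upper_lt_size_pieces i_up.
rewrite mem_topRemoved /inPtminusP (inside i i_lt _ _ Ti_top).
by apply/(has_nthP (fun _ _ => false)); exists i.
Qed.

End WellFormed.

End Pieces.

Theorem lemma3p3 (R : numFieldType) (P : mcpoly) (n : nat) (y : int) (w : R) :
  mc_wf P -> inS P n y -> w != 0 -> w != 1 ->
  let k := (mc_N P - n)%N in
  let num : {poly R} := (k`!)%:R *: Qpoly R P in
  let den : {poly R} := poch ('X - (y%:~R)%:P) k.+1 * (Qpoly R P)^`() in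
  (forall j : 'I_k.+1, (cancel_den num den).[(y - j%:Z)%:~R] != 0) /\
  \sum_(j < k.+1)
     cancel_eval num den (y - j%:Z)%:~R / Sfun (mc_N P) (y - j%:Z) w
  = 1 / Sfun n y w.
Proof.
move=> wf yS w_neq0 w_neq1 k num den.
have term_val (j : 'I_k.+1) :=
  cancel_eval_Qpoly_poch R (leq_ord j) (inS_column_topRemoved wf yS (leq_ord j)).
split=> [j|]; first by have [] := term_val j.
under eq_bigr => j _ do rewrite (term_val j).2.
by rewrite -(subnK (inS_le_N yS)) sum_signed_binomial_Sfun.
Qed.
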